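(* Let $K>1$ and $\alpha_1,\dots,\alpha_K>0$, and let $p_0^{(k)} = \mathcal{N}(\mathbf{0}, \alpha_k \mathbf{I})$ on $\mathbb{R}^d$ for all $k \leq K$. Denote the Product of Experts (PoE) of these distributions by $p^{\mathrm{PoE}}_0 \coloneqq \mathrm{PoE}(p_0^{(1)}, \dots, p_0^{(K)})$. For any density $q_0$, write $q_t$ for the marginal distribution at time $t$ obtained by diffusing $q_0$ under the forward Variance Preserving SDE $\mathrm{d}\mathbf{z}_t = -\beta_t \mathbf{z}_t\,\mathrm{d}t + \sqrt{2\beta_t}\,\mathrm{d}\mathbf{w}_t$, $0\le t\le T$, $\mathbf{z}_0\sim q_0$ (so $p^{\mathrm{PoE}}_t$ is the diffusion of $p^{\mathrm{PoE}}_0$ and $p^{(k)}_t$ is the diffusion of $p^{(k)}_0$). Then, for any $t>0$, $p^{\mathrm{PoE}}_t \neq \mathrm{PoE}(p^{(1)}_t, \dots, p^{(K)}_t)$ unless $\alpha_1 = \dots = \alpha_K$.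
   Context: The Product of Experts of $K$ densities $p^{(1)},\dots,p^{(K)}$ on $\mathbb{R}^d$ is their normalized geometric mean: $\mathrm{PoE}(p^{(1)},\dots,p^{(K)})(\mathbf{x}) \coloneqq \sqrt[K]{p^{(1)}(\mathbf{x})\cdots p^{(K)}(\mathbf{x})}/Z_K$ with $Z_K = \int \sqrt[K]{p^{(1)}(\mathbf{x})\cdots p^{(K)}(\mathbf{x})}\,\mathrm{d}\mathbf{x}$. Its score is the arithmetic mean of the individual scores. Under the VP SDE above, the strong solution is $\mathbf{z}_t = \gamma_t \mathbf{z}_0 + \eta_t$ with deterministic $\gamma_t\in(0,1)$ and Gaussian noise $\eta_t$ independent of $\mathbf{z}_0$, so that if $\mathbf{z}_0\sim\mathcal{N}(\mathbf{0},\boldsymbol{\Sigma})$ then $\mathbf{z}_t\sim\mathcal{N}(\mathbf{0},\gamma_t\boldsymbol{\Sigma}+(1-\gamma_t)\mathbf{I})$. *)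

From HB Require Import structures.
From mathcomp Require Import all_boot all_order all_algebra.
From mathcomp Require Import all_classical all_reals all_analysis.
Set Implicit Arguments. Unset Strict Implicit. Unset Printing Implicit Defensive.
Import Order.TTheory GRing.Theory Num.Theory.
Local Open Scope classical_set_scope.
Local Open Scope ring_scope.

(* Integral over R^d of a function with values in \bar R, defined as the
   iterated one-dimensional Lebesgue integral (for nonnegative measurable
   integrands this is the integral w.r.t. d-dimensional Lebesgue measure,
   by Tonelli). *)
Fixpoint intRd {R : realType} (d : nat) : (d.-tuple R -> \bar R) -> \bar R :=
  match d return (d.-tuple R -> \bar R) -> \bar R with
  | 0%N => fun f => f [tuple]
  | d'.+1 => fun f =>
      (\int[@lebesgue_measure R]_x intRd (fun t : d'.-tuple R => f [tuple of x :: t]))%E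
  end.

Definition sqnorm {R : realType} (d : nat) (x : d.-tuple R) : R :=
  \sum_(i < d) (tnth x i) ^+ 2.

Definition tsub {R : realType} (d : nat) (x y : d.-tuple R) : d.-tuple R :=
  [tuple tnth x i - tnth y i | i < d].

Definition tscale {R : realType} (d : nat) (c : R) (y : d.-tuple R) : d.-tuple R :=
  [tuple c * tnth y i | i < d].

Definition gauss_density {R : realType} (d : nat) (v : R) (x : d.-tuple R) : R :=
  (Num.sqrt (2 * pi * v)) ^- d * expR (- sqnorm x / (2 * v)).

Definition PoE_unnorm {R : realType} (d K : nat) (p : 'I_K -> d.-tuple R -> R)
    (x : d.-tuple R) : R :=
  (\prod_(k < K) p k x) `^ (K%:R^-1).

Definition PoE {R : realType} (d K : nat) (p : 'I_K -> d.-tuple R -> R)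
    (x : d.-tuple R) : R :=
  PoE_unnorm p x / fine (intRd (fun y => (PoE_unnorm p y)%:E)).

(* VP SDE  dz = -beta_t z dt + sqrt(2 beta_t) dw :
   with B_t = int_0^t beta_s ds, its solution is
   z_t = exp(-B_t) z_0 + eta_t, eta_t ~ N(0, (1 - exp(-2 B_t)) I) independent of z_0. *)
Definition Bint {R : realType} (beta : R -> R) (t : R) : R :=
  fine (\int[@lebesgue_measure R]_(s in `[0%R, t]) (beta s)%:E)%E.

Definition vp_diffuse {R : realType} (d : nat) (beta : R -> R) (t : R)
    (q0 : d.-tuple R -> R) (x : d.-tuple R) : R :=
  fine (intRd (fun y : d.-tuple R =>
    (q0 y * gauss_density (1 - expR (- (2 * Bint beta t)))
                          (tsub x (tscale (expR (- Bint beta t)) y)))%:E)).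

From HB Require Import structures.
From mathcomp Require Import all_boot all_order all_algebra.
From mathcomp Require Import all_classical all_reals all_analysis.
From mathcomp Require Import normal_distribution measurable_realfun.
From mathcomp Require Import ring lra.
Set Implicit Arguments. Unset Strict Implicit. Unset Printing Implicit Defensive.
Import Order.TTheory GRing.Theory Num.Theory.
Local Open Scope classical_set_scope.
Local Open Scope ring_scope.

(* Up to a constant, N(0, a I) is exp(-b |x|^2) with precision b = 1/(2a).
   A product of experts of such Gaussians is the Gaussian whose precision is
   the mean of the b_k, and the VP diffusion maps precision b to
   f(b) = b / (g + 2 s b), where g = exp(-2 B_t) and s = 1 - g.  Hence the
   diffused PoE has precision f(mean b), while the PoE of the diffused experts
   has precision mean f(b_k).  Since f is strictly concave, the latter is
   strictly smaller as soon as two alpha_k differ, and two Gaussian shapes on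
   R^d (d > 0) with different precisions are different functions. *)

Section gaussian_integrals.
Context {R : realType}.
Notation mu := (@lebesgue_measure R).

Definition gauss_mass (a : R) : R := Num.sqrt (pi / a).

Lemma gauss_mass_gt0 (a : R) : 0 < a -> 0 < gauss_mass a.
Proof. by move=> a0; rewrite sqrtr_gt0 divr_gt0 // pi_gt0. Qed.

Lemma integral_expR_sqr (a m : R) : 0 < a ->
  (\int[mu]_x (expR (- a * (x - m) ^+ 2))%:E = (gauss_mass a)%:E)%E.
Proof.
move=> a0; set s := Num.sqrt (2 * a)^-1.
have s0 : s != 0 by rewrite gt_eqF // sqrtr_gt0 invr_gt0 mulr_gt0.
have s2 : s ^+ 2 = (2 * a)^-1 by rewrite sqr_sqrtr // invr_ge0 mulr_ge0 // ltW.
have peakE : (normal_peak s)^-1 = gauss_mass a.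
  rewrite /normal_peak invrK s2 /gauss_mass; congr Num.sqrt.
  by rewrite -mulr_natr; field; rewrite gt_eqF.
transitivity (\int[mu]_x ((gauss_mass a)%:E * (normal_pdf m s x)%:E))%E.
  apply: eq_integral => x _; rewrite -EFinM normal_pdfE // -peakE mulKf.
    rewrite /normal_fun s2 -mulr_natr; congr (EFin (expR _)).
    by field; rewrite gt_eqF.
  by rewrite gt_eqF // normal_peak_gt0.
rewrite integralZl //; last exact: integrable_normal_pdf.
by rewrite integral_normal_pdf mule1.
Qed.

Lemma intRd_prod d (h : nat -> R -> R) (I : nat -> R) (c : R) : 0 <= c ->
  (forall i x, 0 <= h i x) -> (forall i, measurable_fun setT (h i)) ->
  (forall i, (\int[mu]_x (h i x)%:E = (I i)%:E)%E) ->
  intRd (fun y : d.-tuple R => (c * \prod_(i < d) h i (tnth y i))%:E) =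
    (c * \prod_(i < d) I i)%:E.
Proof.
elim: d h I c => [|d IH] h I c c0 h0 hm hI /=; first by rewrite !big_ord0.
have I0 i : 0 <= I i.
  by rewrite -lee_fin -hI integral_ge0 // => x _; rewrite lee_fin.
transitivity (\int[mu]_x ((c * \prod_(i < d) I i.+1)%:E * (h 0%N x)%:E))%E.
  apply: eq_integral => x _.
  have -> : (fun t : d.-tuple R =>
      (c * \prod_(i < d.+1) h i (tnth [tuple of x :: t] i))%:E) =
    (fun t : d.-tuple R => (c * h 0%N x * \prod_(i < d) h i.+1 (tnth t i))%:E).
    apply: funext => t; rewrite big_ord_recl mulrA; congr (_ * _ * _)%:E.
    by apply: eq_bigr => i _; rewrite tnthS.
  by rewrite (IH (fun i => h i.+1) (fun i => I i.+1)) ?mulr_ge0 // -EFinM mulrAC.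
rewrite ge0_integralZl_EFin //; last 3 first.
- by move=> x _; rewrite lee_fin.
- by apply/measurable_EFinP; exact: hm.
- by rewrite mulr_ge0 // prodr_ge0.
by rewrite hI -EFinM big_ord_recl; congr EFin; ring.
Qed.

Lemma intRd_expR_sqr d (a c : R) (m : nat -> R) : 0 < a -> 0 <= c ->
  intRd (fun y : d.-tuple R =>
     (c * expR (- a * \sum_(i < d) (tnth y i - m i) ^+ 2))%:E) =
  (c * gauss_mass a ^+ d)%:E.
Proof.
move=> a0 c0.
have := @intRd_prod d (fun i x => expR (- a * (x - m i) ^+ 2)) (fun=> gauss_mass a) c.
rewrite prodr_const card_ord => <- //.
- by congr intRd; apply: funext => y; rewrite mulr_sumr expR_sum.
- move=> i; apply: measurableT_comp => //; apply: measurable_funM => //.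
  exact/measurable_funX/measurable_funB.
- by move=> i; exact: integral_expR_sqr.
Qed.

End gaussian_integrals.

Section positive_integral.
Context {R : realType}.
Notation mu := (@lebesgue_measure R).

Lemma integral_itv_gt0 (f : R -> R) (a b : R) : a < b ->
  mu.-integrable `[a, b] (fun x => (f x)%:E) ->
  (forall x, a <= x <= b -> 0 < f x) ->
  (0 < \int[mu]_(x in `[a, b]) (f x)%:E)%E.
Proof.
move=> ab intf f0.
have {}f0 x : x \in `[a, b] -> 0 < f x by rewrite in_itv; exact: f0.
rewrite lt0e integral_ge0 ?andbT; last first.
  by move=> x /= xab; rewrite lee_fin ltW // f0.
apply/eqP => int0.
have /(ae_eq_integral_abs mu (measurable_itv _) (measurable_int mu intf)).1 :
    (\int[mu]_(x in `[a, b]) `|(f x)%:E| = 0)%E.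
  rewrite -int0; apply: eq_integral => x; rewrite inE /= => xab.
  by rewrite gtr0_norm // f0.
case=> N [mN N0 sN].
have : (mu `[a, b] <= mu N)%E.
  apply: le_measure; rewrite ?inE // => x abx; apply: sN => /= /(_ abx) [].
  by apply/eqP; rewrite gt_eqF // f0.
by rewrite N0 lebesgue_measure_itv /= lte_fin ab lee_fin subr_le0 leNgt ab.
Qed.

Lemma Bint_gt0 (beta : R -> R) (T t : R) :
  (forall s, 0 <= s <= T -> 0 < beta s) ->
  mu.-integrable `[0, T] (fun s => (beta s)%:E) ->
  0 < t <= T -> 0 < Bint beta t.
Proof.
move=> beta0 intT /andP[t0 tT].
have sub : `[0, t] `<=` `[0, T].
  by apply: subset_itvl; rewrite bnd_simp.
have intt : mu.-integrable `[0, t] (fun s => (beta s)%:E) by exact: integrableS intT.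
apply: fine_gt0; rewrite integral_itv_gt0 //=; last first.
  by move=> x /sub; rewrite /= in_itv; exact: beta0.
by rewrite ltey_eq integrable_fin_num.
Qed.

End positive_integral.

Section mean_of_precisions.
Context {R : realFieldType}.

Lemma psumr_gt0 (I : finType) (F : I -> R) (i0 : I) :
  (forall i, 0 <= F i) -> 0 < F i0 -> 0 < \sum_i F i.
Proof.
move=> F0 Fi0; rewrite lt_def sumr_ge0 // andbT psumr_neq0 //.
by apply/hasP; exists i0; rewrite ?mem_index_enum ?Fi0.
Qed.

Definition mean K (e : 'I_K -> R) : R := K%:R^-1 * \sum_k e k.

Lemma mean_gt0 K (e : 'I_K -> R) : (0 < K)%N -> (forall k, 0 < e k) -> 0 < mean e.
Proof.
move=> K0 e0; rewrite mulr_gt0 ?invr_gt0 ?ltr0n //.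
by apply: (psumr_gt0 (i0 := Ordinal K0)) => // k; exact: ltW.
Qed.

(* If [b = 1/(2v)] is the precision of N(0, v), then [diffused_prec g s b]
   is the precision of N(0, g v + s). *)
Definition diffused_prec (g s b : R) : R := b / (g + 2 * s * b).

Lemma diffused_prec_gt0 (g s b : R) : 0 < g -> 0 <= s -> 0 < b ->
  0 < diffused_prec g s b.
Proof. by move=> g0 s0 b0; rewrite divr_gt0 // ltr_wpDr // !mulr_ge0 // ltW. Qed.

Lemma mean_diffused_prec_lt K (g s : R) (b : 'I_K -> R) (k l : 'I_K) :
  0 < g -> 0 < s -> (forall i, 0 < b i) -> b k != b l ->
  mean (fun k => diffused_prec g s (b k)) < diffused_prec g s (mean b).
Proof.
move=> g0 s0 b0 bkl.
have K0 : (0 < K)%N := leq_ltn_trans (leq0n k) (ltn_ord k).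
set m := mean b; have m0 : 0 < m by exact: mean_gt0.
have den0 x : 0 < x -> 0 < g + 2 * s * x.
  by move=> x0; rewrite addr_gt0 // !mulr_gt0.
have denm := den0 m m0; have denb i := den0 _ (b0 i).
pose r i := 2 * s * g * (b i - m) ^+ 2 / ((g + 2 * s * b i) * (g + 2 * s * m) ^+ 2).
have r0 i : 0 <= r i.
  apply: divr_ge0; last by rewrite ltW // mulr_gt0 // exprn_gt0.
  by rewrite mulr_ge0 ?sqr_ge0 // ltW // !mulr_gt0.
(* [diffused_prec g s] lies below its tangent at [m], with gap [r i] *)
have tangent i : diffused_prec g s (b i) =
    diffused_prec g s m + g / (g + 2 * s * m) ^+ 2 * (b i - m) - r i.
  by rewrite /diffused_prec /r; field; rewrite !gt_eqF.
have [j bj] : exists j, b j != m.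
  have [bkm|] := eqVneq (b k) m; last by exists k.
  by exists l; rewrite -bkm eq_sym.
have rj : 0 < r j.
  rewrite /r divr_gt0 //; last by rewrite mulr_gt0 // exprn_gt0.
  by rewrite mulr_gt0 ?exprn_even_gt0 ?subr_eq0 // !mulr_gt0.
have Kn0 : K%:R != 0 :> R by rewrite pnatr_eq0 -lt0n.
have sum_b : \sum_k b k = K%:R * m by rewrite /m /mean mulrA mulfV ?mul1r.
have sum_tangent : \sum_k diffused_prec g s (b k) =
    K%:R * diffused_prec g s m - \sum_i r i.
  rewrite (eq_bigr _ (fun i _ => tangent i)) sumrB big_split /= sumr_const card_ord.
  by rewrite -mulr_sumr sumrB sum_b sumr_const card_ord; ring.
rewrite /mean /= sum_tangent mulrBr mulKf //.
have : 0 < K%:R^-1 * \sum_i r i by rewrite mulr_gt0 ?invr_gt0 ?ltr0n ?(psumr_gt0 (i0 := j)).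
lra.
Qed.

End mean_of_precisions.

Section gaussian_shapes.
Context {R : realType} (d : nat).

Definition gauss_shape (C e : R) (x : d.-tuple R) : R := C * expR (- e * sqnorm x).

Lemma gauss_densityE (v : R) :
  gauss_density v = gauss_shape (Num.sqrt (2 * pi * v) ^- d) (2 * v)^-1.
Proof.
by apply: funext => x; rewrite /gauss_density /gauss_shape !mulNr [sqnorm x * _]mulrC.
Qed.

Lemma sqnorm_cst (c : R) : sqnorm [tuple c | _ < d] = c ^+ 2 *+ d.
Proof.
rewrite /sqnorm (eq_bigr (fun=> c ^+ 2)) => [|i _]; last by rewrite tnth_mktuple.
by rewrite sumr_const card_ord.
Qed.

Lemma gauss_shape_inj (C1 C2 e1 e2 : R) : (0 < d)%N -> C1 != 0 ->
  gauss_shape C1 e1 = gauss_shape C2 e2 -> e1 = e2.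
Proof.
move=> d0 C10 eq12.
have := congr1 (fun f => f [tuple 0 | _ < d]) eq12.
rewrite /gauss_shape sqnorm_cst expr0n mul0rn !mulr0 expR0 !mulr1 => C12.
have := congr1 (fun f => f [tuple 1 | _ < d]) eq12.
rewrite /gauss_shape sqnorm_cst expr1n -C12 => /(mulfI C10)/expR_inj.
by move/(mulIf _)/oppr_inj; apply; rewrite pnatr_eq0 -lt0n.
Qed.

Lemma intRd_gauss_shape (C e : R) : 0 <= C -> 0 < e ->
  intRd (fun y => (gauss_shape C e y)%:E) = (C * gauss_mass e ^+ d)%:E.
Proof.
move=> C0 e0; rewrite -(@intRd_expR_sqr _ d e C (fun=> 0)) //.
congr intRd; apply: funext => y; congr (_ * expR (_ * _))%:E.
by apply: eq_bigr => i _; rewrite subr0.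
Qed.

Lemma PoE_gauss_shape K (C e : 'I_K -> R) : (0 < K)%N ->
  (forall k, 0 < C k) -> (forall k, 0 < e k) ->
  PoE (fun k => gauss_shape (C k) (e k)) =
    gauss_shape (gauss_mass (mean e) ^- d) (mean e).
Proof.
move=> K0 C0 e0; have me0 := mean_gt0 K0 e0.
set P := (\prod_k C k) `^ K%:R^-1.
have P0 : 0 < P by apply/powR_gt0/prodr_gt0 => k _.
have unnormE : PoE_unnorm (fun k => gauss_shape (C k) (e k)) = gauss_shape P (mean e).
  apply: funext => x; rewrite /PoE_unnorm /gauss_shape big_split /= -expR_sum.
  rewrite powRM ?prodr_ge0 ?expR_ge0 // => [|k _]; last exact: ltW.
  rewrite -expRM /mean -mulr_suml sumrN; congr (_ * expR _); ring.
apply: funext => x; rewrite /PoE unnormE intRd_gauss_shape ?ltW //= /gauss_shape.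
by field; rewrite !gt_eqF ?exprn_gt0 ?gauss_mass_gt0.
Qed.

End gaussian_shapes.

Section vp_diffusion.
Context {R : realType} (d : nat) (beta : R -> R) (t : R).
Hypothesis Bt_gt0 : 0 < Bint beta t.

Let g : R := expR (- (2 * Bint beta t)).
Let s : R := 1 - g.

Lemma vp_noise_gt0 : 0 < s.
Proof. by rewrite subr_gt0 expR_lt1 oppr_lt0 mulr_gt0. Qed.

Definition vp_gauss_const (C b : R) : R :=
  C * Num.sqrt (2 * pi * s) ^- d * gauss_mass (b + g / (2 * s)) ^+ d.

Lemma vp_gauss_const_gt0 (C b : R) : 0 < C -> 0 < b -> 0 < vp_gauss_const C b.
Proof.
move=> C0 b0; have s0 := vp_noise_gt0.
rewrite !mulr_gt0 ?invr_gt0 ?exprn_gt0 ?gauss_mass_gt0 ?sqrtr_gt0 //.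
- by rewrite !mulr_gt0 // pi_gt0.
- by rewrite addr_gt0 // divr_gt0 ?expR_gt0 ?mulr_gt0.
Qed.

Lemma vp_diffuse_gauss_shape (C b : R) : 0 <= C -> 0 < b ->
  vp_diffuse beta t (@gauss_shape R d C b) =
    gauss_shape (vp_gauss_const C b) (diffused_prec g s b).
Proof.
move=> C0 b0; apply: funext => x; have s0 := vp_noise_gt0.
set gam := expR (- Bint beta t).
have gamE : gam ^+ 2 = g by rewrite /gam -expRM_natl mulrN.
set a := b + g / (2 * s).
have a0 : 0 < a by rewrite addr_gt0 // divr_gt0 ?expR_gt0 ?mulr_gt0.
(* complete the square in [y]: the center is [gam * x / (g + 2 s b)] *)
pose m i := gam / (g + 2 * s * b) * nth 0 x i.
rewrite /vp_diffuse /gauss_density -/g -/s.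
under eq_fun => y.
  have -> : gauss_shape C b y * (Num.sqrt (2 * pi * s) ^- d *
      expR (- sqnorm (tsub x (tscale gam y)) / (2 * s))) =
    C * Num.sqrt (2 * pi * s) ^- d * expR (- diffused_prec g s b * sqnorm x) *
      expR (- a * \sum_(i < d) (tnth y i - m i) ^+ 2).
    rewrite /gauss_shape mulrACA -!mulrA; congr (_ * (_ * _)).
    rewrite -!expRD; congr expR.
    rewrite /sqnorm -!sumrN !mulr_sumr !mulr_suml -!big_split /=.
    apply: eq_bigr => i _; rewrite !tnth_mktuple (tnth_nth 0 x) /diffused_prec /a /m.
    rewrite -gamE; field.
    by rewrite gamE !gt_eqF // addr_gt0 ?expR_gt0 // !mulr_gt0.
  over.
rewrite intRd_expR_sqr //=; last first.
  by rewrite !mulr_ge0 ?expR_ge0 ?invr_ge0 ?exprn_ge0 ?sqrtr_ge0.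
by rewrite /gauss_shape /vp_gauss_const; ring.
Qed.

End vp_diffusion.

Theorem proposition2 (R : realType) (d K : nat) (alpha : 'I_K -> R)
    (beta : R -> R) (T t : R) :
  (0 < d)%N -> (1 < K)%N ->
  (forall k, 0 < alpha k) ->
  measurable_fun `[0, T] beta ->
  (forall s, 0 <= s <= T -> 0 < beta s) ->
  (@lebesgue_measure R).-integrable `[0, T] (fun s => (beta s)%:E) ->
  0 < t <= T ->
  (exists k l, alpha k != alpha l) ->
  vp_diffuse beta t (PoE (fun k => @gauss_density R d (alpha k)))
    <> PoE (fun k => vp_diffuse beta t (@gauss_density R d (alpha k))).
Proof.
(* measurability of [beta] already follows from its integrability *)
move=> d0 K1 alpha0 _ beta0 int_beta tT [k [l alpha_kl]].
have B0 := Bint_gt0 beta0 int_beta tT; have K0 := ltnW K1.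
set g := expR (- (2 * Bint beta t)); set s := 1 - g.
pose b i := (2 * alpha i)^-1; pose C i := Num.sqrt (2 * pi * alpha i) ^- d.
have b0 i : 0 < b i by rewrite invr_gt0 mulr_gt0.
have C0 i : 0 < C i by rewrite invr_gt0 exprn_gt0 // sqrtr_gt0 !mulr_gt0 // pi_gt0.
have mb0 := mean_gt0 K0 b0.
have M0 : 0 < gauss_mass (mean b) ^- d by rewrite invr_gt0 exprn_gt0 ?gauss_mass_gt0.
have densityE i : @gauss_density R d (alpha i) = gauss_shape (C i) (b i).
  exact: gauss_densityE.
have diffusedE i : vp_diffuse beta t (@gauss_density R d (alpha i)) =
    gauss_shape (vp_gauss_const d beta t (C i) (b i)) (diffused_prec g s (b i)).
  by rewrite densityE; exact: vp_diffuse_gauss_shape (ltW (C0 i)) (b0 i).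
rewrite (eq_fun densityE) (eq_fun diffusedE) !PoE_gauss_shape //; last 2 first.
- by move=> i; exact: vp_gauss_const_gt0.
- by move=> i; rewrite diffused_prec_gt0 ?expR_gt0 ?ltW ?vp_noise_gt0.
rewrite (vp_diffuse_gauss_shape d B0) ?ltW //.
move/(gauss_shape_inj d0 (lt0r_neq0 (vp_gauss_const_gt0 d B0 M0 mb0))) => prec_eq.
have b_kl : b k != b l.
  by apply: contra alpha_kl => /eqP/invr_inj/mulfI; rewrite pnatr_eq0 => ->.
move: prec_eq; apply/eqP; rewrite eq_sym; apply/negbT/lt_eqF.
exact: mean_diffused_prec_lt (expR_gt0 _) (vp_noise_gt0 B0) b0 b_kl.
Qed.
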